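(* Let $(X,d)$ be an ultrametric space, let $\mathcal{U}_0=\{X\}$ and $\mathcal{U}_n=\{B(x,\tfrac1n):x\in X\}$ for $n\in\mathbb{N}_+$. Then $\mathcal{A}=\{\mathcal{U}_n\}_{n\in\mathbb{N}}$ is a tame defining sequence of $X$, which is complete if and only if the ultrametric $u_{\mathcal{A}}$ is complete.
   Context: An ultrametric space satisfies $d(x,z)\le\max\{d(x,y),d(y,z)\}$; $B(x,r)$ is the open ball of radius $r$ at $x$. A partition is a cover by pairwise disjoint nonempty clopen sets; $\mathcal{U}[x]$ is the element containing $x$. A defining sequence is a sequence $\{\mathcal{U}_n\}$ of partitions with each element of $\mathcal{U}_{n+1}$ contained in an element of $\mathcal{U}_n$ and $\bigcup_n\mathcal{U}_n$ a basis; complete if nested sequences $U_n\in\mathcal{U}_n$ have nonempty intersection; tame (w.r.t. $d$) if $\sup\{\operatorname{diam}O:O\in\mathcal{U}_n\}\to0$ and for each $n$ there is $\rho_n>0$ with points in distinct elements of $\mathcal{U}_n$ at distance $\ge\rho_n$. $u_{\mathcal{A}}(x,y)=1/(1+j)$, $j=\inf\{n:\mathcal{U}_n[x]\ne\mathcal{U}_n[y]\}$. *)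

From Stdlib Require Import Reals Lra Lia Classical ClassicalEpsilon FunctionalExtensionality PropExtensionality.
Open Scope R_scope.

Section Defs.
Variable X : Type.

Definition is_ultrametric (d : X -> X -> R) : Prop :=
  (forall x y, d x y = 0 <-> x = y) /\
  (forall x y, d x y = d y x) /\
  (forall x y z, d x z <= Rmax (d x y) (d y z)).

Definition ball (d : X -> X -> R) (x : X) (r : R) : X -> Prop :=
  fun y => d x y < r.

Definition is_open (d : X -> X -> R) (G : X -> Prop) : Prop :=
  forall x, G x -> exists r, 0 < r /\ forall y, d x y < r -> G y.
Definition is_closed (d : X -> X -> R) (F : X -> Prop) : Prop :=
  is_open d (fun x => ~ F x).
Definition is_clopen (d : X -> X -> R) (O : X -> Prop) : Prop :=
  is_open d O /\ is_closed d O.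

Definition is_partition (d : X -> X -> R) (P : (X -> Prop) -> Prop) : Prop :=
  (forall O, P O -> (exists x, O x) /\ is_clopen d O) /\
  (forall x, exists O, P O /\ O x) /\
  (forall O1 O2, P O1 -> P O2 -> O1 <> O2 -> forall x, ~ (O1 x /\ O2 x)).

Definition is_defining_sequence (d : X -> X -> R)
    (U : nat -> (X -> Prop) -> Prop) : Prop :=
  (forall n, is_partition d (U n)) /\
  (forall n O, U (S n) O -> exists O', U n O' /\ forall x, O x -> O' x) /\
  (forall G, is_open d G -> forall x, G x ->
     exists n O, U n O /\ O x /\ forall y, O y -> G y).

Definition is_complete_defseq (U : nat -> (X -> Prop) -> Prop) : Prop :=
  forall O : nat -> X -> Prop,
    (forall n, U n (O n)) ->
    (forall n x, O (S n) x -> O n x) ->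
    exists x, forall n, O n x.

Definition is_tame (d : X -> X -> R) (U : nat -> (X -> Prop) -> Prop) : Prop :=
  (* sup { diam O : O in U n } -> 0 *)
  (forall eps, 0 < eps -> exists N, forall n, (N <= n)%nat ->
     forall O, U n O -> forall x y, O x -> O y -> d x y <= eps) /\
  (forall n, exists rho, 0 < rho /\
     forall O1 O2, U n O1 -> U n O2 -> O1 <> O2 ->
       forall x y, O1 x -> O2 y -> rho <= d x y).

(* U_n[x] : the element of U n containing x (written as the union of the
   elements containing x, which is that element when U n is a partition) *)
Definition cell (U : nat -> (X -> Prop) -> Prop) (n : nat) (x : X) : X -> Prop :=
  fun z => exists O, U n O /\ O x /\ O z.

Lemma least_exists (P : nat -> Prop) :
  (exists n, P n) -> exists j, P j /\ forall k, (k < j)%nat -> ~ P k.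
Proof.
  intros [n Hn].
  revert Hn. induction n as [n IH] using (well_founded_induction Wf_nat.lt_wf).
  intros Hn.
  destruct (classic (exists k, (k < n)%nat /\ P k)) as [[k [Hk Pk]]|Hno].
  - exact (IH k Hk Pk).
  - exists n; split; [exact Hn|]. intros k Hk Pk. apply Hno; eauto.
Qed.

(* u_A(x,y) = 1/(1+j), j = inf { n : U_n[x] <> U_n[y] }  (and 0 if no such n) *)
Definition uA (U : nat -> (X -> Prop) -> Prop) (x y : X) : R :=
  match excluded_middle_informative (exists n, cell U n x <> cell U n y) with
  | left H =>
      / (1 + INR (proj1_sig (constructive_indefinite_description _
                   (least_exists (fun n => cell U n x <> cell U n y) H))))
  | right _ => 0
  end.

Definition is_complete_metric (m : X -> X -> R) : Prop :=
  forall s : nat -> X,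
    (forall eps, 0 < eps -> exists N, forall p q, (N <= p)%nat -> (N <= q)%nat ->
       m (s p) (s q) < eps) ->
    exists l, forall eps, 0 < eps -> exists N, forall p, (N <= p)%nat -> m (s p) l < eps.

Definition ball_seq (d : X -> X -> R) (n : nat) : (X -> Prop) -> Prop :=
  match n with
  | O => fun O => O = (fun _ => True)
  | S m => fun O => exists x, O = ball d x (/ INR (S m))
  end.

End Defs.
Arguments is_ultrametric {X}. Arguments ball {X}. Arguments is_open {X}. Arguments is_closed {X}. Arguments is_clopen {X}. Arguments is_partition {X}. Arguments is_defining_sequence {X}. Arguments is_complete_defseq {X}. Arguments is_tame {X}. Arguments cell {X}. Arguments uA {X}. Arguments is_complete_metric {X}. Arguments ball_seq {X}.

(** In an ultrametric space every point of a ball is a centre of it, so two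
    balls of the same radius are equal or disjoint: the balls of radius 1/n
    partition X into clopen sets, each refining the previous one.  Two points
    lie in the same ball of radius 1/(k+1) exactly when their distance is
    below 1/(k+1), so u_A(x,y) is small exactly when d(x,y) is small; hence
    u_A and d have the same Cauchy and the same convergent sequences.  Finally
    d is complete iff the defining sequence is: the centres of a nested
    sequence of balls of radii 1/n form a Cauchy sequence whose limit lies in
    every ball, and a Cauchy sequence eventually stays inside nested balls
    of radii 1/n whose common point is its limit. *)

From Stdlib Require Import Reals Lra Lia Classical ClassicalEpsilon FunctionalExtensionality PropExtensionality.
Open Scope R_scope.

(* [radius k] = 1/(k+1) is the radius of the balls of [ball_seq d (S k)], and also
   the value of [uA] at two points whose cells first differ at level [k]. *)
Definition radius (k : nat) : R := / INR (S k).

Lemma radius_pos (k : nat) : 0 < radius k.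
Proof. apply Rinv_0_lt_compat, lt_0_INR; lia. Qed.

Lemma radius_lt_iff (j n : nat) : radius j < radius n <-> (n < j)%nat.
Proof.
  unfold radius; split; intro H.
  - destruct (Nat.lt_ge_cases n j) as [|Hjn]; [assumption|].
    assert (/ INR (S n) <= / INR (S j)); [|lra].
    apply Rinv_le_contravar; [apply lt_0_INR; lia | apply le_INR; lia].
  - apply Rinv_lt_contravar; [|apply lt_INR; lia].
    apply Rmult_lt_0_compat; apply lt_0_INR; lia.
Qed.

Lemma radius_le (k m : nat) : (k <= m)%nat -> radius m <= radius k.
Proof.
  intro H; apply Rinv_le_contravar; [apply lt_0_INR; lia | apply le_INR; lia].
Qed.

Lemma radius_succ_le (k : nat) : radius (S k) <= radius k.
Proof. apply radius_le; lia. Qed.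

Lemma exists_radius_lt (eps : R) : 0 < eps -> exists k, radius k < eps.
Proof.
  intro He; destruct (archimed_cor1 eps He) as [[|k] [Hk Hpos]]; [lia|].
  exists k; exact Hk.
Qed.

Lemma uA_lt_radius (X : Type) (U : nat -> (X -> Prop) -> Prop) (x y : X) (n : nat) :
  uA U x y < radius n <-> forall k, (k <= n)%nat -> cell U k x = cell U k y.
Proof.
  unfold uA; destruct (excluded_middle_informative _) as [Hdiff|Hsame].
  - destruct (constructive_indefinite_description _ _) as [j [Hj Hmin]]; cbn.
    replace (1 + INR j) with (INR (S j)) by (rewrite S_INR; ring).
    change (/ INR (S j)) with (radius j); rewrite radius_lt_iff; split.
    + intros Hnj k Hk; apply NNPP; apply Hmin; lia.
    + intro Hagree; destruct (Nat.lt_ge_cases n j) as [|Hjn]; [assumption|].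
      exfalso; exact (Hj (Hagree j Hjn)).
  - split; [|intros _; apply radius_pos].
    intros _ k _; apply NNPP; intro Hk; exact (Hsame (ex_intro _ k Hk)).
Qed.

Section CompletenessTransfer.
Variable X : Type.

Definition uniformly_dominated (m1 m2 : X -> X -> R) : Prop :=
  forall eps, 0 < eps -> exists delta, 0 < delta /\
    forall x y, m2 x y < delta -> m1 x y < eps.

Lemma is_complete_metric_transfer (m1 m2 : X -> X -> R) :
  uniformly_dominated m1 m2 -> uniformly_dominated m2 m1 ->
  is_complete_metric m1 -> is_complete_metric m2.
Proof.
  intros H12 H21 Hcomplete s Hcauchy.
  destruct (Hcomplete s) as [l Hl].
  - intros eps He; destruct (H12 eps He) as [delta [Hdelta Hsmall]].
    destruct (Hcauchy delta Hdelta) as [N HN].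
    exists N; intros p q Hp Hq; apply Hsmall, HN; assumption.
  - exists l; intros eps He; destruct (H21 eps He) as [delta [Hdelta Hsmall]].
    destruct (Hl delta Hdelta) as [N HN].
    exists N; intros p Hp; apply Hsmall, HN; assumption.
Qed.

End CompletenessTransfer.

Fixpoint running_max (f : nat -> nat) (m : nat) : nat :=
  match m with
  | O => f O
  | S m' => Nat.max (running_max f m') (f (S m'))
  end.

Lemma running_max_ge (f : nat -> nat) (m : nat) : (f m <= running_max f m)%nat.
Proof. destruct m; simpl; lia. Qed.

Lemma running_max_mono (f : nat -> nat) (m p : nat) :
  (m <= p)%nat -> (running_max f m <= running_max f p)%nat.
Proof. induction 1; simpl; lia. Qed.

Section Ultrametric.
Variable X : Type.
Variable d : X -> X -> R.
Hypothesis Hd : is_ultrametric d.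

Lemma dist_refl (x : X) : d x x = 0.
Proof. apply (proj1 Hd); reflexivity. Qed.

Lemma dist_sym (x y : X) : d x y = d y x.
Proof. apply (proj1 (proj2 Hd)). Qed.

Lemma dist_lt_trans (x y z : X) (r : R) : d x y < r -> d y z < r -> d x z < r.
Proof.
  intros Hxy Hyz; eapply Rle_lt_trans; [apply (proj2 (proj2 Hd) x y z)|].
  apply Rmax_lub_lt; assumption.
Qed.

Lemma ball_center (x : X) (r : R) : 0 < r -> ball d x r x.
Proof. unfold ball; rewrite dist_refl; trivial. Qed.

Lemma ball_dist_lt (c x y : X) (r : R) : ball d c r x -> ball d c r y -> d x y < r.
Proof.
  unfold ball; intros Hx Hy; apply (dist_lt_trans x c y); [rewrite dist_sym|]; assumption.
Qed.

Lemma ball_recenter (c x : X) (r : R) : ball d c r x -> ball d c r = ball d x r.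
Proof.
  intro Hx; apply functional_extensionality; intro z; apply propositional_extensionality.
  split; intro Hz.
  - exact (ball_dist_lt c x z r Hx Hz).
  - exact (dist_lt_trans c x z r Hx Hz).
Qed.

Lemma ball_eq_of_common (a b x : X) (r : R) :
  ball d a r x -> ball d b r x -> ball d a r = ball d b r.
Proof.
  intros Ha Hb; rewrite (ball_recenter a x r Ha), (ball_recenter b x r Hb); reflexivity.
Qed.

Lemma ball_clopen (c : X) (r : R) : 0 < r -> is_clopen d (ball d c r).
Proof.
  intro Hr; split.
  - intros x Hx; exists r; split; [assumption|].
    rewrite (ball_recenter c x r Hx); trivial.
  - intros x Hx; exists r; split; [assumption|].
    intros y Hxy Hy; apply Hx.
    rewrite (ball_recenter c y r Hy); unfold ball; rewrite dist_sym; assumption.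
Qed.

Lemma cell_ball_seq_0 (x : X) : cell (ball_seq d) 0 x = fun _ => True.
Proof.
  apply functional_extensionality; intro z; apply propositional_extensionality.
  split; [trivial|]; intros _; exists (fun _ => True); cbn; tauto.
Qed.

Lemma cell_ball_seq_succ (k : nat) (x : X) :
  cell (ball_seq d) (S k) x = ball d x (radius k).
Proof.
  apply functional_extensionality; intro z; apply propositional_extensionality.
  split.
  - intros [O [[c ->] [Hx Hz]]]; rewrite <- (ball_recenter c x (radius k) Hx); exact Hz.
  - intro Hz; exists (ball d x (radius k)).
    split; [exists x; reflexivity|]; split; [apply ball_center, radius_pos | exact Hz].
Qed.

Lemma cell_ball_seq_succ_eq_iff (k : nat) (x y : X) :
  cell (ball_seq d) (S k) x = cell (ball_seq d) (S k) y <-> d x y < radius k.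
Proof.
  rewrite !cell_ball_seq_succ; split.
  - intro E; assert (Hy : ball d x (radius k) y) by (rewrite E; apply ball_center, radius_pos).
    exact Hy.
  - exact (ball_recenter x y (radius k)).
Qed.

Lemma uA_ball_seq_lt_iff (m : nat) (x y : X) :
  uA (ball_seq d) x y < radius (S m) <-> d x y < radius m.
Proof.
  rewrite uA_lt_radius; split.
  - intro Hagree; apply cell_ball_seq_succ_eq_iff, Hagree; lia.
  - intros Hxy [|k] Hk; [rewrite !cell_ball_seq_0; reflexivity|].
    apply cell_ball_seq_succ_eq_iff.
    apply Rlt_le_trans with (radius m); [assumption | apply radius_le; lia].
Qed.

Lemma ball_seq_partition (x0 : X) (n : nat) : is_partition d (ball_seq d n).
Proof.
  destruct n as [|k]; split; [| split | | split].
  - cbn; intros O ->; split; [exists x0; trivial|].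
    split; intros x Hx; [exists 1; split; [lra | trivial] | destruct (Hx I)].
  - intro x; exists (fun _ => True); cbn; tauto.
  - cbn; intros O1 O2 -> -> Hne; contradiction Hne; reflexivity.
  - intros O [c ->]; split.
    + exists c; apply ball_center, radius_pos.
    + apply ball_clopen, radius_pos.
  - intro x; exists (ball d x (radius k)); split; [exists x; reflexivity|].
    apply ball_center, radius_pos.
  - intros O1 O2 [a ->] [b ->] Hne x [Ha Hb]; exact (Hne (ball_eq_of_common a b x _ Ha Hb)).
Qed.

Lemma ball_seq_refines (n : nat) (O : X -> Prop) :
  ball_seq d (S n) O -> exists O', ball_seq d n O' /\ forall x, O x -> O' x.
Proof.
  intros [c ->]; destruct n as [|k].
  - exists (fun _ => True); cbn; tauto.
  - exists (ball d c (radius k)); split; [exists c; reflexivity|].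
    intros x Hx; pose proof (radius_succ_le k).
    unfold ball in *; change (/ INR (S (S k))) with (radius (S k)) in Hx; lra.
Qed.

Lemma ball_seq_basis (G : X -> Prop) :
  is_open d G -> forall x, G x ->
  exists n O, ball_seq d n O /\ O x /\ forall y, O y -> G y.
Proof.
  intros HG x Gx; destruct (HG x Gx) as [r [Hr Hball]].
  destruct (exists_radius_lt r Hr) as [k Hk].
  exists (S k), (ball d x (radius k)); split; [exists x; reflexivity|].
  split; [apply ball_center, radius_pos|].
  intros y Hy; apply Hball; unfold ball in Hy; lra.
Qed.

Lemma ball_seq_defining_sequence (x0 : X) : is_defining_sequence d (ball_seq d).
Proof.
  split; [exact (ball_seq_partition x0)|].
  split; [exact ball_seq_refines | exact ball_seq_basis].
Qed.

Lemma ball_seq_tame : is_tame d (ball_seq d).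
Proof.
  split.
  - intros eps He; destruct (exists_radius_lt eps He) as [m Hm]; exists (S m).
    intros [|n] Hn O HO x y Hx Hy; [lia|]; destruct HO as [c ->].
    pose proof (ball_dist_lt c x y _ Hx Hy); pose proof (radius_le m n ltac:(lia)).
    change (/ INR (S n)) with (radius n) in *; lra.
  - intros [|k].
    + exists 1; split; [lra|]; cbn; intros O1 O2 -> -> Hne; contradiction Hne; reflexivity.
    + exists (radius k); split; [apply radius_pos|].
      intros O1 O2 [a ->] [b ->] Hne x y Hx Hy.
      destruct (Rle_or_lt (radius k) (d x y)) as [|Hxy]; [assumption|].
      contradiction Hne.
      rewrite (ball_recenter a x _ Hx), (ball_recenter b y _ Hy).
      apply ball_recenter; exact Hxy.
Qed.

Lemma uA_ball_seq_dominated_by_dist : uniformly_dominated X (uA (ball_seq d)) d.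
Proof.
  intros eps He; destruct (exists_radius_lt eps He) as [m Hm].
  exists (radius m); split; [apply radius_pos|]; intros x y Hxy.
  pose proof (radius_succ_le m).
  apply uA_ball_seq_lt_iff in Hxy; lra.
Qed.

Lemma dist_dominated_by_uA_ball_seq : uniformly_dominated X d (uA (ball_seq d)).
Proof.
  intros eps He; destruct (exists_radius_lt eps He) as [m Hm].
  exists (radius (S m)); split; [apply radius_pos|]; intros x y Hxy.
  apply uA_ball_seq_lt_iff in Hxy; lra.
Qed.

Lemma complete_defseq_complete_metric :
  is_complete_defseq (ball_seq d) -> is_complete_metric d.
Proof.
  intros Hcomplete s Hcauchy.
  assert (Hmod : forall m, exists N, forall p q, (N <= p)%nat -> (N <= q)%nat ->
                   d (s p) (s q) < radius m)
    by (intro m; exact (Hcauchy _ (radius_pos m))).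
  destruct (choice _ Hmod) as [Nf HNf].
  set (M := running_max Nf).
  assert (HM : forall m p q, (M m <= p)%nat -> (M m <= q)%nat -> d (s p) (s q) < radius m).
  { intros m p q Hp Hq; pose proof (running_max_ge Nf m); apply HNf; unfold M in *; lia. }
  set (nest := fun n => match n with 0%nat => fun _ : X => True | S m => ball d (s (M m)) (radius m) end).
  destruct (Hcomplete nest) as [l Hl].
  - intros [|m]; [reflexivity | exists (s (M m)); reflexivity].
  - intros [|m] x Hx; [exact I|].
    change (d (s (M (S m))) x < radius (S m)) in Hx; change (d (s (M m)) x < radius m).
    apply (dist_lt_trans _ (s (M (S m)))).
    + apply HM; [lia | apply running_max_mono; lia].
    + pose proof (radius_succ_le m); lra.
  - exists l; intros eps He; destruct (exists_radius_lt eps He) as [m Hm].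
    exists (M m); intros p Hp.
    assert (d (s p) l < radius m); [|lra].
    apply (dist_lt_trans _ (s (M m))); [apply HM; lia | exact (Hl (S m))].
Qed.

Lemma complete_metric_complete_defseq :
  is_complete_metric d -> is_complete_defseq (ball_seq d).
Proof.
  intros Hcomplete O HO Hnest.
  assert (Hsub : forall m p, (m <= p)%nat -> forall x, O p x -> O m x)
    by (intros m p Hmp; induction Hmp; auto).
  destruct (choice (fun m c => O (S m) = ball d c (radius m)) (fun m => HO (S m)))
    as [c Hc].
  assert (Hcentres : forall m p, (m <= p)%nat -> d (c m) (c p) < radius m).
  { intros m p Hmp; assert (Hin : O (S m) (c p)).
    { apply (Hsub (S m) (S p)); [lia|]; rewrite Hc; apply ball_center, radius_pos. }
    rewrite Hc in Hin; exact Hin. }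
  destruct (Hcomplete c) as [l Hl].
  - intros eps He; destruct (exists_radius_lt eps He) as [m Hm]; exists m.
    intros p q Hp Hq; assert (d (c p) (c q) < radius m); [|lra].
    apply (dist_lt_trans _ (c m)); [rewrite dist_sym|]; apply Hcentres; assumption.
  - exists l; intros [|m]; [rewrite (HO 0%nat); exact I|].
    destruct (Hl _ (radius_pos m)) as [N HN].
    rewrite Hc; apply (dist_lt_trans _ (c (Nat.max N m))).
    + apply Hcentres; lia.
    + apply HN; lia.
Qed.

Lemma is_complete_metric_uA_ball_seq_iff :
  is_complete_metric (uA (ball_seq d)) <-> is_complete_metric d.
Proof.
  split; apply is_complete_metric_transfer.
  - exact uA_ball_seq_dominated_by_dist.
  - exact dist_dominated_by_uA_ball_seq.
  - exact dist_dominated_by_uA_ball_seq.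
  - exact uA_ball_seq_dominated_by_dist.
Qed.

Lemma is_complete_defseq_ball_seq_iff :
  is_complete_defseq (ball_seq d) <-> is_complete_metric d.
Proof.
  split; [exact complete_defseq_complete_metric | exact complete_metric_complete_defseq].
Qed.

End Ultrametric.

Theorem proposition3p11 (X : Type) (d : X -> X -> R) (x0 : X)
  (Hd : is_ultrametric d) :
  is_defining_sequence d (ball_seq d) /\
  is_tame d (ball_seq d) /\
  (is_complete_defseq (ball_seq d) <-> is_complete_metric (uA (ball_seq d))).
Proof.
  split; [exact (ball_seq_defining_sequence X d Hd x0)|].
  split; [exact (ball_seq_tame X d Hd)|].
  rewrite (is_complete_defseq_ball_seq_iff X d Hd), (is_complete_metric_uA_ball_seq_iff X d Hd).
  reflexivity.
Qed.
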